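(* In the setting described in the context, let $v\in\operatorname{Lip}_1(X_h)$ and $\lambda\in\mathbb{R}$ satisfy $\hat F_h^+v=\lambda+v$. Then $\lambda-h\le\rho\le\lambda$, where $\rho$ is the value of the escape rate game played on $\operatorname{Int}C$ with the maps $T_{ab}$.
   Context: Let $C\subset\mathbb{R}^n$ be a pointed closed convex cone, $C^*$ its dual cone, $e^*\in\operatorname{int}C^*$, and $\Delta=\{x\in C:\langle x,e^*\rangle=1\}$. $x\le_C y$ means $y-x\in C$; $\operatorname{Funk}(x,y)=\log\inf\{\lambda>0:x\le_C\lambda y\}$ on $\operatorname{Int}C$; $\operatorname{Hil}(x,y)=\operatorname{Funk}(x,y)+\operatorname{Funk}(y,x)$. Let $\mathcal{A},\mathcal{B}$ be nonempty compact action sets and $(T_{ab})_{(a,b)\in\mathcal{A}\times\mathcal{B}}$ self-maps of $\operatorname{Int}C$ nonexpansive for $\operatorname{Funk}$ (i.e. $\operatorname{Funk}(T_{ab}x,T_{ab}y)\le\operatorname{Funk}(x,y)$), such that for each $x$ the maps $a\mapsto T_{ab}(x)$, $b\mapsto T_{ab}(x)$ are continuous, for each compact $K$ the set $\{T_{ab}(x):(a,b,x)\in\mathcal{A}\times\mathcal{B}\times K\}$ is compact, and each $T_{ab}$ extends continuously (Euclidean topology) to $C$. Small cone assumption: there is a closed cone $K\subset C$ with $T_{ab}(K)\subset K$ for all $a,b$ and $X:=K\cap\Delta\subset\operatorname{relint}\Delta$. For $h>0$, $X_h\subset X$ is a finite set with $X\subset\bigcup_{y\in X_h}\{x:\operatorname{Hil}(x,y)<h\}$.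 $\operatorname{Lip}_1(Y)$ is the set of $f:Y\to\mathbb{R}$ with $f(x)-f(y)\le\operatorname{Funk}(x,y)$ for $x,y\in Y$. $F$ maps $v\in\operatorname{Lip}_1(X)$ to $Fv(x)=\inf_{a\in\mathcal{A}}\sup_{b\in\mathcal{B}}\big[\log\langle T_{ab}(x),e^*\rangle+v\big(T_{ab}(x)/\langle T_{ab}(x),e^*\rangle\big)\big]$; $I_h^+v(x)=\min_{y\in X_h}[v(y)+\operatorname{Funk}(x,y)]$ for $v\in\mathbb{R}^{X_h}$, $x\in X$; $R_h$ is restriction to $X_h$; $\hat F_h^+=R_hFI_h^+$. Escape rate game: from $x_0\in\operatorname{Int}C$, at each turn $k\ge1$ Min chooses $a_k\in\mathcal{A}$, then Max, after observing it, chooses $b_k\in\mathcal{B}$, and $x_k=T_{a_kb_k}(x_{k-1})$. Strategies map finite histories to actions; payoff $J(\sigma,\tau)=\limsup_k\frac1k\operatorname{Funk}(x_k,x_0)$, minimized by Min, maximized by Max. The value $\rho$ is the number such that for every $\epsilon>0$ there exist strategies $\sigma^*,\tau^*$ with $J(\sigma^*,\tau)\le\rho+\epsilon$ and $J(\sigma,\tau^* )\ge\rho-\epsilon$ for all $\sigma,\tau$. *)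

From HB Require Import structures.
From mathcomp Require Import all_boot all_order all_algebra.
From mathcomp Require Import all_classical all_reals all_analysis.
Set Implicit Arguments. Unset Strict Implicit. Unset Printing Implicit Defensive.
Import Order.TTheory GRing.Theory Num.Theory.
Import numFieldNormedType.Exports.
Local Open Scope classical_set_scope.
Local Open Scope ring_scope.

Section Defs.
Variables (R : realType) (n : nat).
Notation vec := 'rV[R]_n.

Definition inner (x y : vec) : R := \sum_(i < n) x ord0 i * y ord0 i.

Definition is_cone (K : set vec) : Prop :=
  K 0 /\ forall (t : R) x, 0 <= t -> K x -> K (t *: x).

Definition is_convex_cone (C : set vec) : Prop :=
  is_cone C /\ forall x y, C x -> C y -> C (x + y).

Definition pointed (C : set vec) : Prop :=
  forall x, C x -> C (- x) -> x = 0.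

Definition dual_cone (C : set vec) : set vec :=
  [set y | forall x, C x -> 0 <= inner x y].

Definition simplex (C : set vec) (e : vec) : set vec :=
  [set x | C x /\ inner x e = 1].

Definition aff_hull (S : set vec) : set vec :=
  [set y | exists (m : nat) (p : 'I_m -> vec) (w : 'I_m -> R),
      (forall i, S (p i)) /\ \sum_(i < m) w i = 1 /\
      y = \sum_(i < m) w i *: p i].

Definition relint (S : set vec) : set vec :=
  [set x | S x /\ exists2 eps : R, 0 < eps &
      forall y, aff_hull S y -> `|y - x| < eps -> S y].

Definition cone_le (C : set vec) (x y : vec) : Prop := C (y - x).

Definition Funk (C : set vec) (x y : vec) : R :=
  ln (inf [set l : R | 0 < l /\ cone_le C x (l *: y)]).

Definition Hil (C : set vec) (x y : vec) : R := Funk C x y + Funk C y x.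

Definition Lip1 (C : set vec) (Y : set vec) (f : vec -> R) : Prop :=
  forall x y, Y x -> Y y -> f x - f y <= Funk C x y.

Definition Fop (A B : Type) (T : A -> B -> vec -> vec) (e : vec)
    (v : vec -> R) (x : vec) : R :=
  inf [set (sup [set ln (inner (T a b x) e) + v ((inner (T a b x) e)^-1 *: T a b x)
                | b in [set: B]]) | a in [set: A]].

Definition Ihp (C : set vec) (Xh : seq vec) (v : vec -> R) (x : vec) : R :=
  inf [set v y + Funk C x y | y in [set` Xh]].

(* hat F_h^+ = R_h F I_h^+ ; evaluate at points of X_h *)
Definition Fhat (C : set vec) (A B : Type) (T : A -> B -> vec -> vec) (e : vec)
    (Xh : seq vec) (v : vec -> R) (x : vec) : R :=
  Fop T e (Ihp C Xh v) x.

(* Escape rate game.  Since the dynamics are deterministic and x_0 is fixed,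
   a finite history is determined by the past action pairs. *)
Definition min_strategy (A B : Type) := seq (A * B) -> A.
Definition max_strategy (A B : Type) := seq (A * B) -> A -> B.

Fixpoint play (A B : Type) (T : A -> B -> vec -> vec)
    (sigma : min_strategy A B) (tau : max_strategy A B) (x0 : vec) (k : nat)
    : seq (A * B) * vec :=
  match k with
  | 0 => ([::], x0)
  | k'.+1 => let hx := play T sigma tau x0 k' in
             let a := sigma hx.1 in
             let b := tau hx.1 a in
             (rcons hx.1 (a, b), T a b hx.2)
  end.

Definition payoff (C : set vec) (A B : Type) (T : A -> B -> vec -> vec)
    (x0 : vec) (sigma : min_strategy A B) (tau : max_strategy A B) : \bar R :=
  limn_esup (fun k : nat => ((Funk C (play T sigma tau x0 k).2 x0) / k%:R)%:E).

Definition is_game_value (C : set vec) (A B : Type) (T : A -> B -> vec -> vec)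
    (x0 : vec) (rho : R) : Prop :=
  forall eps : R, 0 < eps ->
    exists (sigma_s : min_strategy A B) (tau_s : max_strategy A B),
      (forall tau, (payoff C T x0 sigma_s tau <= (rho + eps)%:E)%E) /\
      (forall sigma, ((rho - eps)%:E <= payoff C T x0 sigma tau_s)%E).

End Defs.

From HB Require Import structures.
From mathcomp Require Import all_boot all_order all_algebra.
From mathcomp Require Import all_classical all_reals all_analysis.
From mathcomp Require Import ring lra.
Import Order.TTheory GRing.Theory Num.Theory.
Import numFieldNormedType.Exports.
Local Open Scope classical_set_scope.
Local Open Scope ring_scope.

(* On the whole of Int C the function u := I_h^+ v satisfies
   u x = log <x,e*> + u (x / <x,e*>) and u x - u y <= Funk(x, y), so the
   eigen-equation says that at a grid point y Min can keep u (T_ab y) below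
   lam + v y + eps whatever Max answers, while Max can answer any a so as to
   keep it above lam + v y - eps.  Moving from a state x to a grid point y
   costs Funk(x, y) for Min (y attaining the minimum that defines u x) and
   Hil(x, y) < h for Max (y covering x, which needs x in K).  Hence stationary
   strategies make u grow by at most lam + eps, resp. at least lam - h - eps,
   per turn, and since u stays within bounded distance of Funk(., x0) along
   plays, their escape rates bracket rho. *)

Section Inner.
Context {R : realType} {n : nat}.
Implicit Types (x y e : 'rV[R]_n).

Lemma innerDl x y e : inner (x + y) e = inner x e + inner y e.
Proof. by rewrite /inner -big_split; apply: eq_bigr => i _; rewrite mxE mulrDl. Qed.

Lemma innerZl (t : R) x e : inner (t *: x) e = t * inner x e.
Proof. by rewrite /inner mulr_sumr; apply: eq_bigr => i _; rewrite mxE mulrA. Qed.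

Lemma inner0r x : inner x 0 = 0.
Proof. by rewrite /inner big1 // => i _; rewrite mxE mulr0. Qed.

Lemma innerBl x y e : inner (x - y) e = inner x e - inner y e.
Proof. by rewrite innerDl -scaleN1r innerZl mulN1r. Qed.

Lemma inner_self_gt0 e : e != 0 -> 0 < inner e e.
Proof.
case/rV0Pn => i ei; rewrite /inner (bigD1 i) //= ltr_pwDl ?sumr_ge0 //.
  by rewrite -expr2 exprn_even_gt0.
by move=> j _; rewrite -expr2 sqr_ge0.
Qed.

Lemma continuous_inner e : continuous (fun x : 'rV[R]_n => inner x e).
Proof.
have -> : (fun x : 'rV[R]_n => inner x e) =
    \sum_(i < n) (fun x : 'rV[R]_n => x ord0 i * e ord0 i).
  by apply: boolp.funext => x; rewrite fct_sumE.
apply: (big_ind (fun g : 'rV[R]_n -> R => continuous g)).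
- exact: cst_continuous.
- by move=> f g cf cg y; apply: continuousD; [exact: cf | exact: cg].
- move=> i _ y.
  apply: (@continuousM _ _ (fun x : 'rV[R]_n => x ord0 i) (fun=> e ord0 i)).
    exact: coord_continuous.
  exact: cst_continuous.
Qed.

End Inner.

Lemma exists_small_mul {R : realFieldType} {r M : R} : 0 < r -> 0 <= M ->
  exists2 t, 0 < t & t * M < r.
Proof.
move=> r0 M0; exists (r / (M + 1)); first by rewrite divr_gt0 // ltr_wpDl.
rewrite mulrAC ltr_pdivrMr ?ltr_wpDl //; nra.
Qed.

Lemma exists_nat_abs_le {R : archiRealFieldType} (D d : R) : 0 < d ->
  exists N, forall k, (N <= k)%N -> 0 < k%:R :> R /\ `|D| <= d * k%:R.
Proof.
move=> d0; exists (Num.truncn (`|D| / d)).+1 => k hk; split.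
  by rewrite ltr0n; apply: leq_trans hk.
rewrite mulrC -ler_pdivrMr //; apply/ltW/(lt_le_trans (truncnS_gt _)).
by rewrite ler_nat.
Qed.

Lemma le_linear_growth {R : numDomainType} (f : nat -> R) (c : R) :
  (forall k, f k.+1 <= f k + c) -> forall k, f k <= f 0%N + c * k%:R.
Proof.
move=> step; elim=> [|k IH]; first by rewrite mulr0 addr0.
by rewrite (le_trans (step k)) // -natr1 mulrDr mulr1 addrA lerD2r.
Qed.

Lemma ge_linear_growth {R : numDomainType} (f : nat -> R) (c : R) :
  (forall k, f k + c <= f k.+1) -> forall k, f 0%N + c * k%:R <= f k.
Proof.
move=> step; elim=> [|k IH]; first by rewrite mulr0 addr0.
by rewrite (le_trans _ (step k)) // -natr1 mulrDr mulr1 addrA lerD2r.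
Qed.

Section LimsupAverage.
Context {R : realType}.
Implicit Types (f : nat -> R) (c D : R).

Lemma limn_esup_div_le f c D : (forall k, f k <= c * k%:R + D) ->
  (limn_esup (fun k => (f k / k%:R)%:E) <= c%:E)%E.
Proof.
move=> f_le; apply/lee_addgt0Pr => d d0; rewrite -EFinD.
have [N HN] := exists_nat_abs_le D _ d0.
rewrite limn_esup_lim; apply: lime_le; first exact: is_cvg_esups.
exists N => // m /= hm; apply: ge_ereal_sup => _ [k /= hk <-].
have [k0 hkD] := HN k (leq_trans hm hk).
rewrite lee_fin ler_pdivrMr //.
have := f_le k; have := ler_norm D; nra.
Qed.

Lemma limn_esup_div_ge f c D : (forall k, c * k%:R - D <= f k) ->
  (c%:E <= limn_esup (fun k => (f k / k%:R)%:E))%E.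
Proof.
move=> f_ge; apply/lee_subgt0Pr => d d0; rewrite -EFinB.
have [N HN] := exists_nat_abs_le D _ d0.
rewrite limn_esup_lim; apply: lime_ge; first exact: is_cvg_esups.
exists N => // m /= hm.
apply: (@le_trans _ _ ((f (maxn m N) / (maxn m N)%:R)%:E)); last first.
  by apply: ereal_sup_ubound; exists (maxn m N) => //=; rewrite leq_maxl.
have [k0 hkD] := HN (maxn m N) (leq_maxr _ _).
rewrite lee_fin ler_pdivlMr //.
have := f_ge (maxn m N); have := ler_norm D; nra.
Qed.

End LimsupAverage.

Section InfSeq.
Context {R : realType} {T : eqType} (f : T -> R).

Lemma seq_argmin {s : seq T} : s != [::] ->
  exists2 y, y \in s & forall z, z \in s -> f y <= f z.
Proof.
elim: s => // x s IH _.
have [->|/IH [y ys y_min]] := eqVneq s [::].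
  by exists x; rewrite ?mem_head // => z; rewrite inE => /eqP ->.
have [fxy|fyx] := leP (f x) (f y).
  exists x; first exact: mem_head.
  by move=> z; rewrite inE => /predU1P [->//|/y_min]; apply: le_trans.
exists y; first by rewrite inE ys orbT.
by move=> z; rewrite inE => /predU1P [->|/y_min//]; apply: ltW.
Qed.

Lemma inf_image_seq_le (s : seq T) z : z \in s -> inf [set f y | y in [set` s]] <= f z.
Proof.
move=> zs; have s0 : s != [::] by case: s zs.
have [y _ y_min] := seq_argmin s0.
by apply: ge_inf; [exists (f y) => _ [w ws <-]; apply: y_min | exists z].
Qed.

Lemma inf_image_seq_attained (s : seq T) : s != [::] ->
  exists2 y, y \in s & inf [set f z | z in [set` s]] = f y.
Proof.
move=> s0; have [y ys y_min] := seq_argmin s0.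
exists y => //; apply/eqP; rewrite eq_le inf_image_seq_le //=.
by apply: lb_le_inf; [exists (f y), y | move=> _ [z zs <-]; apply: y_min].
Qed.

End InfSeq.

Section Plays.
Context {R : realType} {n : nat} {A B : Type}.
Variable T : A -> B -> 'rV[R]_n -> 'rV[R]_n.
Implicit Types (x y : 'rV[R]_n) (P : set 'rV[R]_n).
Implicit Types (sg : min_strategy A B) (tu : max_strategy A B).

Definition state_of x0 (s : seq (A * B)) := foldl (fun x ab => T ab.1 ab.2 x) x0 s.

Lemma play_history sg tu x y k : (play T sg tu x k).1 = (play T sg tu y k).1.
Proof. by elim: k => //= k ->. Qed.

Lemma play_stateE sg tu x0 k :
  (play T sg tu x0 k).2 = state_of x0 (play T sg tu x0 k).1.
Proof.
by elim: k => //= k IH; rewrite /state_of in IH *; rewrite foldl_rcons /= -IH.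
Qed.

Lemma play_invariant P sg tu x0 k :
  (forall a b x, P x -> P (T a b x)) -> P x0 -> P (play T sg tu x0 k).2.
Proof. by move=> TP Px0; elim: k => //= k; apply: TP. Qed.

Lemma play_nonexpansive {P} {d : 'rV[R]_n -> 'rV[R]_n -> R} sg tu {x y} k :
  (forall a b x, P x -> P (T a b x)) ->
  (forall a b x y, P x -> P y -> d (T a b x) (T a b y) <= d x y) ->
  P x -> P y -> d (play T sg tu x k).2 (play T sg tu y k).2 <= d x y.
Proof.
move=> TP Td Px Py; elim: k => //= k IH.
rewrite (play_history sg tu x y k); apply: le_trans IH.
by apply: Td; apply: play_invariant.
Qed.

Lemma stationary_min_growth {P} {phi : 'rV[R]_n -> R} {c : R}
    {f : 'rV[R]_n -> A} {x0} tu k :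
  (forall a b x, P x -> P (T a b x)) -> P x0 ->
  (forall x b, P x -> phi (T (f x) b x) <= phi x + c) ->
  phi (play T (fun s => f (state_of x0 s)) tu x0 k).2 <= phi x0 + c * k%:R.
Proof.
move=> TP Px0 f_step; apply: (le_linear_growth (fun k => phi (play T _ tu x0 k).2)).
by move=> j /=; rewrite -play_stateE; apply: f_step; apply: play_invariant.
Qed.

Lemma stationary_max_growth {P} {phi : 'rV[R]_n -> R} {c : R}
    {g : 'rV[R]_n * A -> B} {x0} sg k :
  (forall a b x, P x -> P (T a b x)) -> P x0 ->
  (forall x a, P x -> phi x + c <= phi (T a (g (x, a)) x)) ->
  phi x0 + c * k%:R <= phi (play T sg (fun s a => g (state_of x0 s, a)) x0 k).2.
Proof.
move=> TP Px0 g_step; apply: (ge_linear_growth (fun k => phi (play T sg _ x0 k).2)).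
by move=> j /=; rewrite -play_stateE; apply: g_step; apply: play_invariant.
Qed.

End Plays.

Section FunkGeometry.
Context {R : realType} {n : nat} {C : set 'rV[R]_n}.
Implicit Types (x y z w : 'rV[R]_n).

Lemma interior_normP x :
  interior C x <-> exists2 r : R, 0 < r & forall d, `|d| < r -> C (x + d).
Proof.
split=> [/nbhs_ballP [r r0 H]|[r r0 H]].
  exists r => // d hd; apply: H.
  by rewrite -ball_normE /= opprD addrA subrr add0r normrN.
apply/nbhs_ballP; exists r => // y; rewrite -ball_normE /= => hy.
by rewrite -(subrKC x y); apply: H; rewrite -normrN opprB.
Qed.

Hypothesis C_cone : is_convex_cone C.

Lemma coneZ (t : R) x : 0 <= t -> C x -> C (t *: x).
Proof. by case: C_cone => -[_ C_scale] _; apply: C_scale. Qed.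

Lemma coneD x y : C x -> C y -> C (x + y).
Proof. by case: C_cone => _; apply. Qed.

Lemma coneZ_gt0 (t : R) x : 0 < t -> C (t *: x) = C x.
Proof.
move=> t0; apply: boolp.propext; split; last by apply: coneZ; rewrite ltW.
have t_inv0 : 0 <= t^-1 by rewrite invr_ge0 ltW.
by move/(coneZ _ _ t_inv0); rewrite scalerA mulVf ?gt_eqF // scale1r.
Qed.

Lemma interiorZ (c : R) x : 0 < c -> interior C x -> interior C (c *: x).
Proof.
move=> c0 /interior_normP [r r0 H]; apply/interior_normP.
exists (c * r) => [|d hd]; first exact: mulr_gt0.
have -> : c *: x + d = c *: (x + c^-1 *: d).
  by rewrite scalerDr scalerA mulfV ?gt_eqF // scale1r.
rewrite coneZ_gt0 //; apply: H.
by rewrite normrZ gtr0_norm ?invr_gt0 // ltr_pdivrMl.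
Qed.

Lemma interiorDl x z : C x -> interior C z -> interior C (x + z).
Proof.
move=> Cx /interior_normP [r r0 H]; apply/interior_normP; exists r => // d hd.
by rewrite -addrA; apply: coneD => //; apply: H.
Qed.

Context {e : 'rV[R]_n}.
Hypothesis e_dual : dual_cone C e.
Hypothesis e_neq0 : e != 0.

Definition Funk_set x y := [set l : R | 0 < l /\ cone_le C x (l *: y)].

Lemma FunkE x y : Funk C x y = ln (inf (Funk_set x y)).
Proof. by []. Qed.

Lemma inner_interior_gt0 {x} : interior C x -> 0 < inner x e.
Proof.
move=> /interior_normP [r r0 H].
have [t t0 ht] := exists_small_mul r0 (normr_ge0 e).
have := H (- (t *: e)); rewrite normrN normrZ gtr0_norm // => /(_ ht) /e_dual.
rewrite innerBl innerZl subr_ge0; apply: lt_le_trans.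
by rewrite mulr_gt0 // inner_self_gt0.
Qed.

Lemma Funk_set_uniform {y} {M : R} : interior C y -> 0 <= M ->
  exists2 L, 0 < L & forall w, `|w| <= M -> Funk_set w y L.
Proof.
move=> /interior_normP [r r0 H] M0.
have [t t0 ht] := exists_small_mul r0 M0.
have t_inv0 : 0 < t^-1 by rewrite invr_gt0.
exists t^-1 => // w hw; split => //; rewrite /cone_le.
have -> : t^-1 *: y - w = t^-1 *: (y + - (t *: w)).
  by rewrite scalerDr scalerN scalerA mulVf ?gt_eqF // scale1r.
rewrite coneZ_gt0 //; apply: H.
by rewrite normrN normrZ gtr0_norm // (le_lt_trans _ ht) // ler_pM2l.
Qed.

Lemma Funk_set_neq0 x y : interior C y -> Funk_set x y !=set0.
Proof.
by move=> iy; have [L _ HL] := Funk_set_uniform iy (normr_ge0 x); exists L; apply: HL.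
Qed.

Lemma Funk_set_lbound x y : has_lbound (Funk_set x y).
Proof. by exists 0 => l [l0 _]; rewrite ltW. Qed.

Lemma Funk_set_ge x y l : 0 < inner y e -> Funk_set x y l ->
  inner x e / inner y e <= l.
Proof.
move=> y0 [_ /e_dual]; rewrite innerBl innerZl subr_ge0.
by rewrite ler_pdivrMr.
Qed.

Lemma Funk_set_mul x y z l1 l2 :
  Funk_set x y l1 -> Funk_set y z l2 -> Funk_set x z (l1 * l2).
Proof.
move=> [l10 xy] [l20 yz]; split; first exact: mulr_gt0.
rewrite /cone_le.
have -> : (l1 * l2) *: z - x = l1 *: (l2 *: z - y) + (l1 *: y - x).
  by rewrite scalerBr scalerA addrA subrK.
by apply: coneD => //; apply: coneZ => //; rewrite ltW.
Qed.

Lemma inf_Funk_set_ge x y : interior C y ->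
  inner x e / inner y e <= inf (Funk_set x y).
Proof.
move=> iy; apply: lb_le_inf; first exact: Funk_set_neq0.
by move=> l; apply: Funk_set_ge; apply: inner_interior_gt0.
Qed.

Lemma inf_Funk_set_gt0 x y : 0 < inner x e -> interior C y ->
  0 < inf (Funk_set x y).
Proof.
move=> x0 iy; apply: lt_le_trans (inf_Funk_set_ge x y iy).
by rewrite divr_gt0 // inner_interior_gt0.
Qed.

Lemma Funk_le_ln {x y l} : 0 < inner x e -> interior C y -> Funk_set x y l ->
  Funk C x y <= ln l.
Proof.
move=> x0 iy xyl; rewrite FunkE ler_ln ?posrE ?inf_Funk_set_gt0 //; last by case: xyl.
exact: (ge_inf (Funk_set_lbound x y)).
Qed.

Lemma ln_ratio_le_Funk {x y} : 0 < inner x e -> interior C y ->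
  ln (inner x e / inner y e) <= Funk C x y.
Proof.
move=> x0 iy; have y0 := inner_interior_gt0 iy.
by rewrite FunkE ler_ln ?posrE ?inf_Funk_set_gt0 ?divr_gt0 ?inf_Funk_set_ge.
Qed.

Lemma Funk_triangle {x y z} : 0 < inner x e -> interior C y -> interior C z ->
  Funk C x z <= Funk C x y + Funk C y z.
Proof.
move=> x0 iy iz; have y0 := inner_interior_gt0 iy.
rewrite !FunkE -lnM ?posrE ?inf_Funk_set_gt0 //.
rewrite ler_ln ?posrE ?mulr_gt0 ?inf_Funk_set_gt0 //.
set c := inf (Funk_set x z).
have c_le l1 l2 : Funk_set x y l1 -> Funk_set y z l2 -> c <= l1 * l2.
  by move=> h1 h2; apply: (ge_inf (Funk_set_lbound x z)); apply: Funk_set_mul h1 h2.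
rewrite -ler_pdivrMl ?inf_Funk_set_gt0 //.
apply: lb_le_inf; first exact: Funk_set_neq0.
move=> l2 h2; have l20 : 0 < l2 by case: h2.
rewrite ler_pdivrMl ?inf_Funk_set_gt0 // -ler_pdivrMr //.
apply: lb_le_inf; first exact: Funk_set_neq0.
by move=> l1 h1; rewrite ler_pdivrMr // c_le.
Qed.

Lemma Funk_setZ (a b : R) x y l : 0 < a -> 0 < b ->
  Funk_set x y l -> Funk_set (a *: x) (b *: y) (a / b * l).
Proof.
move=> a0 b0 [l0 xyl]; split; first by rewrite !mulr_gt0 ?invr_gt0.
rewrite /cone_le.
have -> : (a / b * l) *: (b *: y) - a *: x = a *: (l *: y - x).
  rewrite scalerBr !scalerA; congr (_ *: _ - _).
  by rewrite mulrAC divfK ?gt_eqF.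
by rewrite coneZ_gt0.
Qed.

Lemma Funk_scale_le (a b : R) x y : 0 < a -> 0 < b -> 0 < inner x e ->
  interior C y -> Funk C (a *: x) (b *: y) <= ln a - ln b + Funk C x y.
Proof.
move=> a0 b0 x0 iy; have k0 : 0 < a / b by rewrite divr_gt0.
have ax0 : 0 < inner (a *: x) e by rewrite innerZl mulr_gt0.
have iby : interior C (b *: y) by apply: interiorZ.
rewrite !FunkE -ln_div ?posrE // -lnM ?posrE ?inf_Funk_set_gt0 //.
rewrite ler_ln ?posrE ?mulr_gt0 ?invr_gt0 ?inf_Funk_set_gt0 //.
rewrite -ler_pdivrMl //; apply: lb_le_inf; first exact: Funk_set_neq0.
move=> l xyl; rewrite ler_pdivrMl //.
by apply: (ge_inf (Funk_set_lbound _ _)); apply: Funk_setZ.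
Qed.

Lemma FunkZ (a b : R) x y : 0 < a -> 0 < b -> 0 < inner x e -> interior C y ->
  Funk C (a *: x) (b *: y) = ln a - ln b + Funk C x y.
Proof.
move=> a0 b0 x0 iy; apply/eqP; rewrite eq_le Funk_scale_le //=.
have ax0 : 0 < inner (a *: x) e by rewrite innerZl mulr_gt0.
have := @Funk_scale_le a^-1 b^-1 (a *: x) (b *: y).
rewrite !invr_gt0 => /(_ a0 b0 ax0 (interiorZ _ _ b0 iy)).
rewrite !scalerA !mulVf ?gt_eqF // !scale1r !lnV ?posrE //; lra.
Qed.

Definition normalize w := (inner w e)^-1 *: w.

Lemma inner_normalize {w} : 0 < inner w e -> inner (normalize w) e = 1.
Proof. by move=> w0; rewrite innerZl mulVf ?gt_eqF. Qed.

Lemma normalizeK {w} : 0 < inner w e -> inner w e *: normalize w = w.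
Proof. by move=> w0; rewrite scalerA mulfV ?gt_eqF // scale1r. Qed.

Lemma interior_normalize {w} : interior C w -> interior C (normalize w).
Proof.
by move=> iw; apply: interiorZ => //; rewrite invr_gt0 inner_interior_gt0.
Qed.

Lemma Funk_normalizel {w y} : interior C w -> interior C y ->
  Funk C w y = ln (inner w e) + Funk C (normalize w) y.
Proof.
move=> iw iy; have w0 := inner_interior_gt0 iw.
have := @FunkZ (inner w e) 1 (normalize w) y w0 ltr01.
by rewrite normalizeK // scale1r ln1 subr0 inner_normalize //; apply.
Qed.

Lemma Funk_normalizer {w y} : interior C w -> 0 < inner y e ->
  Funk C y w = - ln (inner w e) + Funk C y (normalize w).
Proof.
move=> iw y0; have w0 := inner_interior_gt0 iw.
have := @FunkZ 1 (inner w e) y (normalize w) ltr01 w0.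
by rewrite normalizeK // scale1r ln1 add0r; apply=> //; apply: interior_normalize.
Qed.

Lemma Hil_normalize {w y} : interior C w -> interior C y ->
  Hil C w y = Hil C (normalize w) y.
Proof.
move=> iw iy; have y0 := inner_interior_gt0 iy.
by rewrite /Hil (Funk_normalizel iw iy) (Funk_normalizer iw y0) addrACA addrN add0r.
Qed.

Lemma relint_simplex_interior {x0 y} : interior C x0 ->
  relint (simplex C e) y -> interior C y.
Proof.
move=> ix0 [[Cy ye] [eps eps0 near_y]].
(* Push y slightly away from the interior point q inside Delta, to z; then y
   lies strictly between z and q. *)
have x00 := inner_interior_gt0 ix0.
set q := normalize x0.
have iq : interior C q := interior_normalize ix0.
have qe : inner q e = 1 := inner_normalize x00.
clearbody q.
have [t t0 ht] := exists_small_mul eps0 (normr_ge0 (y - q)).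
have t1 : 0 < 1 + t by rewrite ltr_wpDl.
set z := (1 + t) *: y - t *: q.
have Dz : simplex C e z.
  apply: near_y; last first.
    suff -> : z - y = t *: (y - q) by rewrite normrZ gtr0_norm.
    by rewrite /z scalerDl scale1r scalerBr addrAC [y + _]addrC addrK.
  exists 2%N, (fun i : 'I_2 => if val i == 0%N then y else q),
    (fun i : 'I_2 => if val i == 0%N then 1 + t else - t).
  split; first by move=> i; case: ifP => _; split => //; apply: interior_subset.
  by rewrite !big_ord_recl !big_ord0 /= !addr0 scaleNr addrK; split.
have -> : y = (1 + t)^-1 *: z + (t / (1 + t)) *: q.
  rewrite /z scalerBr !scalerA mulVf ?gt_eqF // scale1r mulrC.
  by rewrite subrK.
apply: interiorDl; first by apply: coneZ; [rewrite invr_ge0 ltW | case: Dz].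
by apply: interiorZ => //; rewrite divr_gt0.
Qed.

Lemma compact_interior_bounds (S : set 'rV[R]_n) :
  compact S -> S !=set0 -> S `<=` interior C ->
  exists2 m : R, 0 < m & exists M : R, forall w, S w -> m <= inner w e /\ `|w| <= M.
Proof.
move=> cS S0 SC.
have [c Sc c_min] := compact_EVT_min S0 cS
  (continuous_subspaceT (@continuous_inner R n e)).
rewrite inE in Sc.
exists (inner c e); first exact/inner_interior_gt0/SC.
have [M [_ HM]] := compact_bounded cS.
exists (M + 1) => w Sw; split; first by apply: c_min; rewrite inE.
by apply: (HM (M + 1)) => //; rewrite ltrDl.
Qed.

Section Grid.
Context {Xh : seq 'rV[R]_n} {v : 'rV[R]_n -> R}.
Hypothesis Xh_interior : forall {y}, y \in Xh -> interior C y.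
Hypothesis Xh_simplex : forall {y}, y \in Xh -> inner y e = 1.
Hypothesis Xh_neq0 : Xh != [::].

Local Notation u := (Ihp C Xh v).

Lemma Ihp_attained z : exists2 y, y \in Xh & u z = v y + Funk C z y.
Proof. exact: inf_image_seq_attained. Qed.

Lemma Ihp_le z {y} : y \in Xh -> u z <= v y + Funk C z y.
Proof. exact: inf_image_seq_le. Qed.

Lemma Ihp_Lip {z1 z2} : 0 < inner z1 e -> interior C z2 -> u z1 - u z2 <= Funk C z1 z2.
Proof.
move=> z10 iz2; have [y ys ->] := Ihp_attained z2.
have := Ihp_le z1 ys; have := Funk_triangle z10 iz2 (Xh_interior ys); lra.
Qed.

Lemma Ihp_normalize {w} : interior C w -> u w = ln (inner w e) + u (normalize w).
Proof.
move=> iw; have [y ys uw] := Ihp_attained w.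
have [y' ys' unw] := Ihp_attained (normalize w).
have := Ihp_le w ys'; have := Ihp_le (normalize w) ys.
rewrite uw unw (Funk_normalizel iw (Xh_interior ys)).
rewrite (Funk_normalizel iw (Xh_interior ys')); lra.
Qed.

Lemma Ihp_ge_ln {M : R} {w} : (forall y, y \in Xh -> M <= v y) -> interior C w ->
  M + ln (inner w e) <= u w.
Proof.
move=> M_le iw; have [y ys ->] := Ihp_attained w.
have := ln_ratio_le_Funk (inner_interior_gt0 iw) (Xh_interior ys).
rewrite (Xh_simplex ys) divr1; have := M_le y ys; lra.
Qed.

Lemma Funk_le_Ihp_add {p} : interior C p ->
  exists D, forall w, interior C w -> Funk C w p <= u w + D.
Proof.
move=> ip; exists (\big[Num.max/0]_(y <- Xh) (Funk C y p - v y)) => w iw.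
have [y ys ->] := Ihp_attained w.
have := le_bigmax_seq 0 y xpredT (fun y => Funk C y p - v y) ys isT.
have := Funk_triangle (inner_interior_gt0 iw) (Xh_interior ys) ip; lra.
Qed.

Section Game.
Context {A B : Type} {T : A -> B -> 'rV[R]_n -> 'rV[R]_n}.
Variables (a0 : A) (b0 : B).
Context {lam : R}.
Hypothesis T_interior : forall a b {x}, interior C x -> interior C (T a b x).
Hypothesis T_Funk : forall a b {x y}, interior C x -> interior C y ->
  Funk C (T a b x) (T a b y) <= Funk C x y.
Hypothesis T_grid_bounded : forall {y}, y \in Xh -> exists2 m : R, 0 < m &
  exists M : R, forall a b, m <= inner (T a b y) e /\ `|T a b y| <= M.
Hypothesis eigen : forall y, y \in Xh -> Fhat C T e Xh v y = lam + v y.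

Let value y a := sup [set u (T a b y) | b in [set: B]].

Lemma Fhat_Ihp y : y \in Xh -> Fhat C T e Xh v y = inf [set value y a | a in [set: A]].
Proof.
move=> ys; congr inf; apply: eq_imagel => a _; congr sup; apply: eq_imagel => b _.
by rewrite (Ihp_normalize (T_interior a b (Xh_interior ys))).
Qed.

(* Without these bounds the sup and inf in Fhat could be junk values. *)
Lemma grid_values_finite {y} : y \in Xh ->
  (forall a, has_sup [set u (T a b y) | b in [set: B]]) /\
  has_inf [set value y a | a in [set: A]].
Proof.
move=> ys; have [m m0 [M HM]] := T_grid_bounded ys.
have iy := Xh_interior ys.
have [L L0 HL] := Funk_set_uniform iy (le_trans (normr_ge0 _) (HM a0 b0).2).
set Lo := \big[Num.min/0]_(z <- Xh) v z + ln m.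
have v_ge z : z \in Xh -> \big[Num.min/0]_(z <- Xh) v z <= v z.
  by move=> zs; apply: ge_bigmin_seq.
have bounds a b : Lo <= u (T a b y) <= v y + ln L.
  have [mT MT] := HM a b; have iT := T_interior a b iy.
  have T0 := inner_interior_gt0 iT.
  apply/andP; split.
    by apply: le_trans (Ihp_ge_ln v_ge iT); rewrite lerD2l ler_ln ?posrE.
  apply: le_trans (Ihp_le _ ys) _; rewrite lerD2l.
  exact: Funk_le_ln T0 iy (HL _ MT).
have sup_b a : has_sup [set u (T a b y) | b in [set: B]].
  split; first by exists (u (T a b0 y)), b0.
  by exists (v y + ln L) => _ [b _ <-]; case/andP: (bounds a b).
split=> //; split; first by exists (value y a0), a0.
exists Lo => _ [a _ <-].
have b0_in : [set u (T a b y) | b in [set: B]] (u (T a b0 y)) by exists b0.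
by apply: le_trans (ub_le_sup (sup_b a).2 b0_in); case/andP: (bounds a b0).
Qed.

Lemma min_response_at_grid {y} {eps : R} : y \in Xh -> 0 < eps ->
  exists a, forall b, u (T a b y) <= lam + v y + eps.
Proof.
move=> ys eps0; have [sup_b inf_a] := grid_values_finite ys.
have [_ [a _ <-] a_opt] := inf_adherent eps0 inf_a.
exists a => b; rewrite -eigen // Fhat_Ihp //.
by apply/ltW/(le_lt_trans _ a_opt)/(ub_le_sup (sup_b a).2); exists b.
Qed.

Lemma max_response_at_grid {y} {eps : R} a : y \in Xh -> 0 < eps ->
  exists b, lam + v y - eps <= u (T a b y).
Proof.
move=> ys eps0; have [sup_b inf_a] := grid_values_finite ys.
have [_ [b _ <-] b_opt] := sup_adherent eps0 (sup_b a).
exists b; apply/ltW/(le_lt_trans _ b_opt); rewrite lerD2r -eigen // Fhat_Ihp //.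
by apply: (ge_inf inf_a.2); exists a.
Qed.

Lemma min_step {w} {eps : R} : interior C w -> 0 < eps ->
  exists a, forall b, u (T a b w) <= u w + lam + eps.
Proof.
move=> iw eps0; have [y ys uw] := Ihp_attained w.
have iy := Xh_interior ys.
have [a a_opt] := min_response_at_grid ys eps0.
exists a => b; have := a_opt b; have := T_Funk a b iw iy.
have := Ihp_Lip (inner_interior_gt0 (T_interior a b iw)) (T_interior a b iy).
(* Generalizing the atoms spares lra expensive conversion tests between them. *)
rewrite uw; move: (u _) (u _) (Funk C _ _) (Funk C _ _) => *; lra.
Qed.

Lemma upper_strategy {x0} {eps : R} : interior C x0 -> 0 < eps ->
  exists sg : min_strategy A B, forall tu,
    (payoff C T x0 sg tu <= (lam + eps)%:E)%E.
Proof.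
move=> ix0 eps0.
have /choice [f f_step] : forall w, exists a,
    forall b, interior C w -> u (T a b w) <= u w + (lam + eps).
  move=> w; have [iw|niw] := pselect (interior C w); last by exists a0 => b /niw.
  by have [a a_step] := min_step iw eps0; exists a => b _; rewrite addrA.
have [D Funk_le] := Funk_le_Ihp_add ix0.
exists (fun s => f (state_of T x0 s)) => tu.
apply: (limn_esup_div_le _ _ (u x0 + D)) => k.
have := stationary_min_growth T tu k T_interior ix0 f_step.
set x := (play _ _ _ x0 k).2.
have ix : interior C x by apply: play_invariant.
have := Funk_le _ ix; move: (u x) (u x0) (Funk C x x0) => *; lra.
Qed.

Section MaxPlayer.
Context {K : set 'rV[R]_n} {h : R}.
Hypothesis K_scale : forall (t : R) x, 0 <= t -> K x -> K (t *: x).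
Hypothesis T_K : forall a b {x}, K x -> K (T a b x).
Hypothesis Xh_K : forall {y}, y \in Xh -> K y.
Hypothesis grid_cover : forall {x}, (K `&` simplex C e) x ->
  exists2 y, y \in Xh & Hil C x y < h.

Lemma max_step {w} {eps : R} a : K w -> interior C w -> 0 < eps ->
  exists b, u w + lam - h - eps <= u (T a b w).
Proof.
move=> Kw iw eps0; have w0 := inner_interior_gt0 iw.
have Kw' : K (normalize w) by apply: K_scale => //; rewrite invr_ge0 ltW.
have Sw' : simplex C e (normalize w).
  split; last exact: inner_normalize.
  by apply: interior_subset; apply: interior_normalize.
have [y ys Hwy] : exists2 y, y \in Xh & Hil C w y < h.
  have [y ys] := grid_cover (conj Kw' Sw').
  by exists y; rewrite // (Hil_normalize iw (Xh_interior ys)).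
have iy := Xh_interior ys.
have [b b_opt] := max_response_at_grid a ys eps0.
exists b; move: b_opt Hwy; rewrite /Hil.
have := Ihp_Lip (inner_interior_gt0 (T_interior a b iy)) (T_interior a b iw).
have := T_Funk a b iy iw; have := Ihp_le w ys.
move: (u _) (u _) (u _) (Funk C _ _) (Funk C _ _) (Funk C _ _) => *; lra.
Qed.

Lemma lower_strategy {x0} {eps : R} : interior C x0 -> 0 < eps ->
  exists tu : max_strategy A B, forall sg,
    ((lam - h - eps)%:E <= payoff C T x0 sg tu)%E.
Proof.
move=> ix0 eps0.
have [p0 p0s] : exists p0, p0 \in Xh.
  by case: Xh Xh_neq0 => // p s _; exists p; rewrite mem_head.
have T_KC a b x : (K `&` interior C) x -> (K `&` interior C) (T a b x).
  by case=> Kx ix; split; [apply: T_K | apply: T_interior].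
have /choice [g g_step] : forall xa : 'rV[R]_n * A, exists b,
    (K `&` interior C) xa.1 -> u xa.1 + (lam - h - eps) <= u (T xa.2 b xa.1).
  case=> w a; have [[Kw iw]|nw] := pselect ((K `&` interior C) w).
    by have [b b_step] := max_step a Kw iw eps0; exists b; rewrite !addrA.
  by exists b0 => /nw.
(* Max steers by the shadow play started at the grid point p0, which stays in
   K where the grid covers; nonexpansiveness keeps the actual play within
   Funk(p0, x0) of it. *)
set tu := fun s a => g (state_of T p0 s, a); exists tu => sg.
apply: (limn_esup_div_ge _ _ (u x0 + Funk C p0 x0 - u p0)) => k.
have ip0 := Xh_interior p0s.
have := stationary_max_growth T sg k T_KC (conj (Xh_K p0s) ip0)
  (fun x a => g_step (x, a)).
have := play_nonexpansive T sg tu k T_interior T_Funk ip0 ix0.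
set y := (play _ _ _ p0 k).2; set x := (play _ _ _ x0 k).2.
have ix : interior C x by apply: play_invariant.
have iy : interior C y by apply: play_invariant.
have := Ihp_Lip (inner_interior_gt0 ix) ix0.
have := Ihp_Lip (inner_interior_gt0 iy) ix.
move: (u x) (u y) (u x0) (u p0) (Funk C x x0) (Funk C y x) (Funk C p0 x0) => *; lra.
Qed.

Lemma escape_rate_bounds {x0 rho} : interior C x0 -> is_game_value C T x0 rho ->
  lam - h <= rho <= lam.
Proof.
move=> ix0 rho_value; apply/andP; split; apply/ler_addgt0Pr => eps eps0;
  have eps20 : 0 < eps / 2 by rewrite divr_gt0.
- have [tu tu_bound] := lower_strategy ix0 eps20.
  have [sg [_ [sg_bound _]]] := rho_value _ eps20.
  by have := le_trans (tu_bound sg) (sg_bound tu); rewrite lee_fin; lra.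
- have [sg sg_bound] := upper_strategy ix0 eps20.
  have [_ [tu [_ tu_bound]]] := rho_value _ eps20.
  by have := le_trans (tu_bound sg) (sg_bound tu); rewrite lee_fin; lra.
Qed.

End MaxPlayer.

End Game.
End Grid.

End FunkGeometry.

Theorem theorem5 (R : realType) (n : nat)
  (C : set 'rV[R]_n) (e : 'rV[R]_n)
  (A B : topologicalType) (T : A -> B -> 'rV[R]_n -> 'rV[R]_n)
  (K : set 'rV[R]_n) (h : R) (Xh : seq 'rV[R]_n)
  (v : 'rV[R]_n -> R) (lam : R) :
  (* C is a pointed closed convex cone, e* in int C* *)
  is_convex_cone C -> closed C -> pointed C ->
  interior (dual_cone C) e ->
  (* nonempty compact action sets *)
  [set: A] !=set0 -> compact [set: A] ->
  [set: B] !=set0 -> compact [set: B] ->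
  (* T_ab are self-maps of Int C, nonexpansive for Funk *)
  (forall a b x, interior C x -> interior C (T a b x)) ->
  (forall a b x y, interior C x -> interior C y ->
     Funk C (T a b x) (T a b y) <= Funk C x y) ->
  (* continuity in the actions *)
  (forall b x, interior C x -> continuous (fun a => T a b x)) ->
  (forall a x, interior C x -> continuous (fun b => T a b x)) ->
  (* compactness of images of compact sets *)
  (forall Kc, Kc `<=` interior C -> compact Kc ->
     compact [set T p.1.1 p.1.2 p.2 | p in [set p : (A * B) * 'rV[R]_n | Kc p.2]]) ->
  (* each T_ab extends continuously to C *)
  (forall a b, {within C, continuous (T a b)}) ->
  (* small cone assumption *)
  is_cone K -> closed K -> K `<=` C ->
  (forall a b x, K x -> K (T a b x)) ->
  (K `&` simplex C e) `<=` relint (simplex C e) ->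
  (K `&` simplex C e) !=set0 ->
  (* discretization grid X_h *)
  0 < h ->
  [set` Xh] `<=` (K `&` simplex C e) ->
  (forall x, (K `&` simplex C e) x -> exists2 y, y \in Xh & Hil C x y < h) ->
  (* v in Lip_1(X_h) is an additive eigenvector of hat F_h^+ *)
  Lip1 C [set` Xh] v ->
  (forall x, x \in Xh -> Fhat C T e Xh v x = lam + v x) ->
  forall x0 rho, interior C x0 -> is_game_value C T x0 rho ->
  lam - h <= rho <= lam.
Proof.
move=> C_cone _ _ e_int [a0 _] _ [b0 _] _ T_int T_Funk _ _ T_img _ [_ K_scale] _ _
  T_K K_relint [x1 Kx1] _ Xh_KS cover _ eigen x0 rho ix0 rho_value.
have e_dual : dual_cone C e := interior_subset e_int.
have [p0 p0s _] := cover x1 Kx1.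
have Xh_neq0 : Xh != [::] by apply: contraTneq p0s => ->.
have Xh_K y : y \in Xh -> K y by move=> /Xh_KS [].
have Xh_simplex y : y \in Xh -> inner y e = 1 by move=> /Xh_KS [_ []].
have e_neq0 : e != 0.
  by apply: contra_neq (oner_neq0 R) => e0; rewrite -(Xh_simplex p0 p0s) e0 inner0r.
have Xh_int y : y \in Xh -> interior C y.
  move=> /Xh_KS /K_relint.
  exact: (relint_simplex_interior C_cone e_dual e_neq0 ix0).
have T_bounded y : y \in Xh -> exists2 m : R, 0 < m &
    exists M : R, forall a b, m <= inner (T a b y) e /\ `|T a b y| <= M.
  move=> ys; have y_int : [set y] `<=` interior C by move=> _ ->; apply: Xh_int.
  have [||m m0 [M HM]] :=
    compact_interior_bounds e_dual e_neq0 _ (T_img _ y_int (@compact_set1 _ y)).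
  - by exists (T a0 b0 y), (a0, b0, y).
  - by move=> _ [[[a b] z] /= -> <-]; apply: T_int; apply: Xh_int.
  by exists m => //; exists M => a b; apply: HM; exists (a, b, y).
exact: (escape_rate_bounds C_cone e_dual e_neq0 Xh_int Xh_simplex Xh_neq0 a0 b0
  T_int T_Funk T_bounded eigen K_scale T_K Xh_K cover ix0 rho_value).
Qed.
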